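(* In the setting of the switching procedure below (with $\lambda=\Theta(\log n)$ and $k=\Theta(\lambda\log n)$), let $D:=\frac{2en\ln n}{k}$. Then $D=\Theta\left(\frac{n}{\log n}\right)$, and the probability that the procedure switches to the $(1+(\lambda,\lambda))$ GA before the $(1+1)$ EA has reached an individual at distance at most $D$ from the optimum is at most $1/n$.
   Context: The procedure maximizes $\mathrm{OneMax}(x)=\sum_{i=1}^n x_i$ on $\{0,1\}^n$ (optimum $1^n$; distance = number of zero-bits). It starts from a uniformly random point and runs the $(1+1)$ EA (each iteration: create one offspring by flipping each bit independently with probability $1/n$, accept it if its fitness is at least the current one) until, for the first time, $k$ consecutive $(1+1)$ EA iterations fail to create a strictly better offspring; then it switches irrevocably to the $(1+(\lambda,\lambda))$ GA with population size $\lambda$ (each iteration: sample $\ell\sim\mathrm{Bin}(n,\lambda/n)$, create $\lambda$ offspring each flipping exactly $\ell$ uniformly random distinct positions, take a best one $x'$; create $\lambda$ crossover offspring each taking per position the bit of $x'$ with probability $1/\lambda$ and of $x$ otherwise; accept a best one $y$ if $f(y)\ge f(x)$). Here $\lambda=\lambda(n)=\Theta(\log n)$ and $k=k(n)=\Theta(\lambda\log n)$. *)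

From HB Require Import structures.
From mathcomp Require Import all_boot all_order all_algebra.
From mathcomp Require Import all_classical all_reals all_analysis.
Set Implicit Arguments. Unset Strict Implicit. Unset Printing Implicit Defensive.
Import Order.TTheory GRing.Theory Num.Theory.
Local Open Scope ring_scope.

Section OnePlusOneEA.
Variable R : realType.
Variable n : nat.

Definition bits := {ffun 'I_n -> bool}.

Definition onemax (x : bits) : nat := #|[set i | x i]|.

Definition dist_opt (x : bits) : nat := #|[set i | ~~ x i]|.

Definition mut_prob (x y : bits) : R :=
  \prod_(i < n) (if x i != y i then n%:R^-1 else 1 - n%:R^-1).

(* early_switch D k T x c : probability that, starting the (1+1) EA phase
   from current individual x with c consecutive non-improving iterations
   already counted, the procedure switches (k consecutive iterations without
   a strictly better offspring) within at most T further (1+1) EA iterations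
   and before an individual at distance <= D from the optimum is reached. *)
Fixpoint early_switch (D : R) (k : nat) (T : nat) (x : bits) (c : nat) : R :=
  if (dist_opt x)%:R <= D then 0
  else if (k <= c)%N then 1
  else match T with
       | 0 => 0
       | T'.+1 =>
         \sum_(y : bits) mut_prob x y *
           (if (onemax x < onemax y)%N then early_switch D k T' y 0
            else if onemax x == onemax y then early_switch D k T' y c.+1
            else early_switch D k T' x c.+1)
       end.

Definition early_switch_init (D : R) (k T : nat) : R :=
  (2%:R ^+ n)^-1 * \sum_(x : bits) early_switch D k T x 0.

End OnePlusOneEA.

Definition Dthr (R : realType) (n k : nat) : R :=
  2 * expR 1 * n%:R * ln (n%:R) / k%:R.

From HB Require Import structures.
From mathcomp Require Import all_boot all_order all_algebra.
From mathcomp Require Import all_classical all_reals all_analysis.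
From mathcomp Require Import ring lra zify.
Import Order.TTheory GRing.Theory Num.Theory.
Local Open Scope ring_scope.

(* An individual at distance d has d zero-bits, and flipping exactly one of
   them (probability (1/n)(1-1/n)^(n-1) >= 1/(en) each) improves it; so above
   distance D = 2en ln n / k an iteration improves with probability at least
   2 ln n / k =: 1 - q.  By induction on the horizon, an early switch from x
   after c consecutive failures has probability at most q^(k-c) + (d(x)-1) q^k:
   a failure multiplies the first term by 1/q, while a success resets it to
   q^k but lowers d.  Initially this is at most n q^k <= n e^(-2 ln n) = 1/n. *)

Section Distance.
Variable n : nat.

Lemma dist_opt_onemax (x : bits n) : (dist_opt x + onemax x)%N = n.
Proof.
rewrite /dist_opt /onemax.
have -> : [set i | ~~ x i] = ~: [set i | x i] by apply/setP => i; rewrite !inE.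
by rewrite addnC cardsC card_ord.
Qed.

Lemma dist_opt_lt (x y : bits n) :
  (onemax x < onemax y)%N -> (dist_opt y < dist_opt x)%N.
Proof. by have := dist_opt_onemax x; have := dist_opt_onemax y; lia. Qed.

Lemma dist_opt_eq (x y : bits n) : onemax x = onemax y -> dist_opt x = dist_opt y.
Proof. by have := dist_opt_onemax x; have := dist_opt_onemax y; lia. Qed.

End Distance.

Arguments dist_opt_onemax {n}.
Arguments dist_opt_lt {n x y}.
Arguments dist_opt_eq {n x y}.

Section Mutation.
Variables (R : realType) (n : nat).

Lemma mut_prob_ge0 (x y : bits n) : 0 <= mut_prob R x y.
Proof.
have inv_le1 : (n%:R : R)^-1 <= 1.
  by case: n => [|m]; rewrite ?invr0 // invf_le1 ?ler1n ?ltr0n.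
apply: prodr_ge0 => i _; case: ifP => _; first by rewrite invr_ge0.
by rewrite subr_ge0.
Qed.

Lemma sum_mut_prob (x : bits n) : \sum_(y : bits n) mut_prob R x y = 1.
Proof.
rewrite /mut_prob -(bigA_distr_bigA (fun i j =>
  if x i != j then (n%:R : R)^-1 else 1 - n%:R^-1)).
by rewrite big1 // => i _; rewrite big_bool /=; case: (x i) => /=; lra.
Qed.

Definition improve_prob (x : bits n) : R :=
  \sum_(y : bits n) mut_prob R x y * (onemax x < onemax y)%:R.

Lemma sum_mut_prob_le (x : bits n) (f : bits n -> R) (a b : R) :
  (forall y, f y <= a - b * (onemax x < onemax y)%:R) ->
  \sum_(y : bits n) mut_prob R x y * f y <= a - b * improve_prob x.
Proof.
move=> fP; have -> : a = a * \sum_(y : bits n) mut_prob R x y.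
  by rewrite sum_mut_prob mulr1.
rewrite /improve_prob !mulr_sumr -sumrB; apply: ler_sum => y _.
by rewrite mulrCA [a * _]mulrC -mulrBr ler_wpM2l ?mut_prob_ge0.
Qed.

Definition set_bit (x : bits n) (i : 'I_n) : bits n := [ffun j => (j == i) || x j].

Lemma mut_prob_set_bit (x : bits n) i : ~~ x i ->
  mut_prob R x (set_bit x i) = n%:R^-1 * (1 - n%:R^-1) ^+ n.-1.
Proof.
move=> xi; rewrite /mut_prob (bigD1 i) //= ffunE eqxx (negbTE xi) /=.
congr (_ * _); rewrite (eq_bigr (fun _ => 1 - n%:R^-1)); last first.
  by move=> j /negbTE ji; rewrite ffunE ji eqxx.
by rewrite prodr_const cardC1 card_ord.
Qed.

Lemma onemax_set_bit (x : bits n) i : ~~ x i -> (onemax x < onemax (set_bit x i))%N.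
Proof.
move=> xi; apply: proper_card; apply/properP; split.
  by apply/fintype.subsetP => j; rewrite !inE ffunE orbC => ->.
by exists i; rewrite inE ?ffunE ?eqxx // (negbTE xi).
Qed.

Lemma improve_prob_ge_dist (x : bits n) :
  (dist_opt x)%:R * (n%:R^-1 * (1 - n%:R^-1) ^+ n.-1) <= improve_prob x.
Proof.
have set_bit_inj : {in [set i | ~~ x i] &, injective (set_bit x)}.
  move=> i j; rewrite !inE => xi xj /ffunP /(_ i); rewrite !ffunE eqxx /=.
  by case: eqP => // _; rewrite (negbTE xi).
pose g y := mut_prob R x y * (onemax x < onemax y)%:R.
rewrite /dist_opt -sum1_card natr_sum mulr_suml.
rewrite (eq_bigr (fun i => g (set_bit x i))); last first.
  by move=> i; rewrite inE => xi; rewrite /g mul1r mut_prob_set_bit // onemax_set_bit // mulr1.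
rewrite -(big_imset g set_bit_inj) /= /improve_prob.
rewrite [X in _ <= X](bigID (mem (set_bit x @: [set i | ~~ x i]))) /= lerDl.
by apply: sumr_ge0 => y _; rewrite mulr_ge0 ?mut_prob_ge0 ?ler0n.
Qed.

End Mutation.

Arguments improve_prob {R n}.

Lemma invexpR1_le_exprB (R : realType) (n : nat) :
  (expR 1)^-1 <= (1 - (n%:R : R)^-1) ^+ n.-1.
Proof.
have e_inv_le1 : (expR 1)^-1 <= 1 :> R.
  by rewrite invf_le1 ?expR_gt0 //; have := expR_ge1Dx (1 : R); lra.
case: n => [|[|m]] /=; rewrite ?expr0 //.
have m0 : 0 < (m.+1%:R : R) by rewrite ltr0n.
have -> : 1 - (m.+2%:R : R)^-1 = (1 + m.+1%:R^-1)^-1.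
  rewrite -[m.+2]addn1 natrD; field; have := ler0n R m; lra.
rewrite exprVn lef_pV2 ?posrE ?expR_gt0 ?exprn_gt0 ?addr_gt0 ?invr_gt0 //.
rewrite -[X in expR X](mulfV (lt0r_neq0 m0)) expRM_natl.
by apply: lerXn2r; rewrite ?nnegrE ?expR_ge0 ?addr_ge0 ?invr_ge0 ?ler0n ?expR_ge1Dx.
Qed.

Lemma improve_prob_ge (R : realType) (n : nat) (x : bits n) :
  (dist_opt x)%:R / (n%:R * expR 1) <= improve_prob x :> R.
Proof.
apply: le_trans _ (improve_prob_ge_dist R n x); rewrite invfM.
by rewrite ler_wpM2l ?ler0n // ler_wpM2l ?invr_ge0 ?ler0n // invexpR1_le_exprB.
Qed.

Section EarlySwitchPotential.
Variables (R : realType) (n : nat) (D : R) (k : nat) (q : R).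
Hypotheses (D_ge0 : 0 <= D) (q_ge0 : 0 <= q).
Hypothesis improve_prob_far :
  forall x : bits n, D < (dist_opt x)%:R -> 1 - q <= improve_prob x.

Definition switch_potential (x : bits n) (c : nat) : R :=
  q ^+ (k - c) + (dist_opt x).-1%:R * q ^+ k.

Lemma switch_potential_ge0 (x : bits n) c : 0 <= switch_potential x c.
Proof. by rewrite addr_ge0 ?mulr_ge0 ?exprn_ge0 ?ler0n. Qed.

Lemma switch_potential_ge1 (x : bits n) c : (k <= c)%N -> 1 <= switch_potential x c.
Proof.
move=> /eqP kc; rewrite /switch_potential kc expr0 lerDl.
by rewrite mulr_ge0 ?exprn_ge0 ?ler0n.
Qed.

Lemma switch_potential0 (x : bits n) : (0 < dist_opt x)%N ->
  switch_potential x 0 = (dist_opt x)%:R * q ^+ k.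
Proof.
rewrite /switch_potential subn0; case: (dist_opt x) => // d _.
by rewrite -natr1 mulrDl mul1r addrC.
Qed.

Lemma early_switch_near T (x : bits n) c :
  (dist_opt x)%:R <= D -> early_switch D k T x c = 0.
Proof. by move=> xD; case: T => [|T] /=; rewrite xD. Qed.

Lemma early_switch_le_potential T (x : bits n) c :
  early_switch D k T x c <= switch_potential x c.
Proof.
elim: T x c => [|T IH] x c /=.
  by case: ifP => _; last case: ifP => kc; rewrite ?switch_potential_ge0 ?switch_potential_ge1.
case: ifP => [_|/negbT]; first exact: switch_potential_ge0.
rewrite -ltNge => far; case: leqP => [kc|ck]; first exact: switch_potential_ge1.
set r := q ^+ (k - c.+1).
apply: (le_trans (sum_mut_prob_le _ _ x _ (switch_potential x c.+1) r _)); last first.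
  have r_ge0 : 0 <= r by rewrite exprn_ge0.
  have := improve_prob_far x far; rewrite /switch_potential -/r.
  have -> : q ^+ (k - c) = r * q by rewrite -exprSr subnSK.
  by move=> /(ler_wpM2l r_ge0); lra.
move=> y; case: ltnP => [better|]; last rewrite leq_eqVlt => /orP[/eqP same|worse].
- rewrite mulr1 /switch_potential -/r addrC addKr.
  have [yD|yD] := lerP (dist_opt y)%:R D; first by rewrite early_switch_near ?mulr_ge0 ?exprn_ge0 ?ler0n.
  have y_gt0 : (0 < dist_opt y)%N by rewrite -(ltr0n R) (le_lt_trans D_ge0).
  apply: le_trans (IH y 0%N) _; rewrite switch_potential0 // ler_wpM2r ?exprn_ge0 // ler_nat.
  by have := dist_opt_lt better; lia.
- rewrite same eqxx mulr0 subr0.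
  by rewrite /switch_potential -(dist_opt_eq same) IH.
- by rewrite gtn_eqF //= mulr0 subr0 IH.
Qed.

Lemma early_switch_init_le T : (0 < n)%N -> @early_switch_init R n D k T <= n%:R * q ^+ k.
Proof.
move=> n_gt0; rewrite /early_switch_init.
have bound (x : bits n) : early_switch D k T x 0 <= n%:R * q ^+ k.
  apply: le_trans (early_switch_le_potential T x 0) _.
  rewrite /switch_potential subn0 -[X in X + _]mul1r -mulrDl ler_wpM2r ?exprn_ge0 //.
  by rewrite addrC natr1 ler_nat; have := dist_opt_onemax x; lia.
apply: le_trans (ler_wpM2l _ (ler_sum _ (fun x _ => bound x))) _.
  by rewrite invr_ge0 exprn_ge0 ?ler0n.
rewrite sumr_const card_ffun card_bool card_ord -[_ *+ (2 ^ n)]mulr_natr natrX.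
by rewrite mulrC mulfK // expf_neq0 // pnatr_eq0.
Qed.

End EarlySwitchPotential.

Arguments early_switch_init_le {R n D k q}.

Lemma exprB_le_expR {R : realType} {t : R} (m : nat) :
  0 <= 1 - t -> (1 - t) ^+ m <= expR (- (t * m%:R)).
Proof.
move=> t_le1; rewrite -mulNr expRM_natr.
by apply: lerXn2r; rewrite ?nnegrE ?expR_ge0 ?expR_ge1Dx.
Qed.

Lemma early_switch_init_le_invn (R : realType) (n k T : nat) :
  (1 < n)%N -> 2 * ln (n%:R : R) <= k%:R ->
  @early_switch_init R n (Dthr R n k) k T <= n%:R^-1.
Proof.
move=> n_gt1 k_ge; set L := ln (n%:R : R) in k_ge *.
have n_gt0 : (0 < n)%N by apply: ltnW.
have n_gt0R : 0 < (n%:R : R) by rewrite ltr0n.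
have L_gt0 : 0 < L by rewrite ln_gt0 // ltr1n.
have k_gt0 : 0 < (k%:R : R) by apply: lt_le_trans k_ge; rewrite mulr_gt0.
have e_gt0 := expR_gt0 (1 : R).
set t := 2 * L / k%:R.
have t_le1 : 0 <= 1 - t by rewrite subr_ge0 ler_pdivrMr // mul1r.
have D_ge0 : 0 <= Dthr R n k by rewrite divr_ge0 ?ler0n // !mulr_ge0 ?ler0n ?ltW.
have far (x : bits n) : Dthr R n k < (dist_opt x)%:R -> 1 - (1 - t) <= improve_prob x.
  move=> xD; apply: le_trans _ (improve_prob_ge R n x); rewrite opprB addrC subrK.
  have -> : t = Dthr R n k / (n%:R * expR 1).
    by rewrite /t /Dthr -/L; field; rewrite !lt0r_neq0.
  by rewrite ler_wpM2r ?invr_ge0 ?mulr_ge0 ?ltW.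
apply: le_trans (early_switch_init_le (k := k) D_ge0 t_le1 far T n_gt0) _.
apply: le_trans (ler_wpM2l (ltW n_gt0R) (exprB_le_expR k t_le1)) _.
rewrite /t divfK ?lt0r_neq0 // expRN expRM_natl lnK ?posrE //.
by rewrite expr2 invfM mulrA mulfV ?mul1r ?lt0r_neq0.
Qed.

Lemma ln_natr_ge0 (R : realType) (n : nat) : 0 <= ln (n%:R : R).
Proof. by case: n => [|n]; [rewrite ln0 | apply: ln_ge0; rewrite ler1n]. Qed.

Lemma ln_natr_unbounded {R : realType} (M : R) :
  exists n0 : nat, forall n : nat, (n0 <= n)%N -> M <= ln (n%:R : R).
Proof.
exists (Num.Def.trunc (expR M)).+1 => n n_ge.
have lt_n : expR M < n%:R by apply: lt_le_trans (truncnS_gt _) _; rewrite ler_nat.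
by rewrite -ler_expR lnK ?posrE ?(lt_trans (expR_gt0 M)) // ltW.
Qed.

Definition big_theta {R : numDomainType} (f g : nat -> R) : Prop :=
  exists (c1 c2 : R) (n0 : nat), 0 < c1 /\ 0 < c2 /\
    forall n : nat, (n0 <= n)%N -> c1 * g n <= f n /\ f n <= c2 * g n.

Lemma big_theta_mulr {R : numDomainType} {f g u h : nat -> R} :
  (forall n, 0 <= u n) -> big_theta f g ->
  big_theta h (fun n => f n * u n) -> big_theta h (fun n => g n * u n).
Proof.
move=> u_ge0 [c1 [c2 [n0 [c1_gt0 [c2_gt0 fP]]]]] [d1 [d2 [n1 [d1_gt0 [d2_gt0 hP]]]]].
exists (d1 * c1), (d2 * c2), (maxn n0 n1); split; first exact: mulr_gt0.
split=> [|n]; first exact: mulr_gt0.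
rewrite geq_max => /andP[/fP[f_ge f_le] /hP[h_ge h_le]]; rewrite -!mulrA; split.
- apply: le_trans h_ge; apply: ler_wpM2l; first exact: ltW.
  by rewrite mulrA ler_wpM2r.
- apply: le_trans h_le _; apply: ler_wpM2l; first exact: ltW.
  by rewrite mulrA ler_wpM2r.
Qed.

Lemma Dthr_big_theta (R : realType) (k : nat -> nat) :
  big_theta (fun n => (k n)%:R : R) (fun n => ln n%:R * ln n%:R) ->
  big_theta (fun n => Dthr R n (k n)) (fun n => n%:R / ln n%:R).
Proof.
case=> [a [b [n0 [a_gt0 [b_gt0 kP]]]]].
have e_gt0 := expR_gt0 (1 : R).
exists (2 * expR 1 / b), (2 * expR 1 / a), (maxn 2 n0).
split; first by rewrite !mulr_gt0 ?invr_gt0.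
split=> [|n]; first by rewrite !mulr_gt0 ?invr_gt0.
rewrite geq_max => /andP[n_ge2 /kP[k_ge k_le]].
set L := ln (n%:R : R) in k_ge k_le *.
have L_gt0 : 0 < L by rewrite ln_gt0 // ltr1n.
have k_gt0 : 0 < (k n)%:R :> R by apply: lt_le_trans k_ge; rewrite !mulr_gt0.
have X_ge0 : 0 <= 2 * expR 1 * n%:R * L :> R by rewrite !mulr_ge0 ?ler0n ?ltW.
have rescale c : 0 < c ->
    2 * expR 1 / c * (n%:R / L) = 2 * expR 1 * n%:R * L / (c * (L * L)).
  by move=> c_gt0; field; rewrite !lt0r_neq0.
rewrite /Dthr -/L (rescale a) // (rescale b) //.
by split; rewrite ler_wpM2l // lef_pV2 ?posrE ?mulr_gt0.
Qed.

Lemma early_switch_init_eventually_le_invn (R : realType) (k : nat -> nat) :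
  big_theta (fun n => (k n)%:R : R) (fun n => ln n%:R * ln n%:R) ->
  exists n0 : nat, forall n : nat, (n0 <= n)%N ->
    forall T : nat, @early_switch_init R n (Dthr R n (k n)) (k n) T <= n%:R^-1.
Proof.
case=> [a [b [n0 [a_gt0 [_ kP]]]]].
have [n1 lnP] := ln_natr_unbounded (2 / a : R).
exists (maxn 2 (maxn n0 n1)) => n.
rewrite !geq_max => /and3P[n_ge2 /kP[k_ge _] /lnP L_ge] T.
apply: early_switch_init_le_invn => //; apply: le_trans k_ge.
rewrite mulrA; apply: ler_wpM2r; first exact: ln_natr_ge0.
by rewrite -ler_pdivrMl // mulrC.
Qed.

Theorem lemma5p2 (R : realType) (lam k : nat -> nat)
  (Hlam : exists (c1 c2 : R) (n0 : nat), 0 < c1 /\ 0 < c2 /\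
     forall n : nat, (n0 <= n)%N ->
       c1 * ln n%:R <= (lam n)%:R /\ (lam n)%:R <= c2 * ln n%:R)
  (Hk : exists (c1 c2 : R) (n0 : nat), 0 < c1 /\ 0 < c2 /\
     forall n : nat, (n0 <= n)%N ->
       c1 * (lam n)%:R * ln n%:R <= (k n)%:R /\
       (k n)%:R <= c2 * (lam n)%:R * ln n%:R) :
  (exists (c1 c2 : R) (n0 : nat), 0 < c1 /\ 0 < c2 /\
     forall n : nat, (n0 <= n)%N ->
       c1 * (n%:R / ln n%:R) <= Dthr R n (k n) /\
       Dthr R n (k n) <= c2 * (n%:R / ln n%:R))
  /\
  (exists n0 : nat, forall n : nat, (n0 <= n)%N ->
     forall T : nat, @early_switch_init R n (Dthr R n (k n)) (k n) T <= n%:R^-1).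
Proof.
have k_lam_ln : big_theta (fun n => (k n)%:R : R) (fun n => (lam n)%:R * ln n%:R).
  case: Hk => [c1 [c2 [n0 [c1_gt0 [c2_gt0 kP]]]]].
  by exists c1, c2, n0; do 2!split=> //; move=> m /kP; rewrite !mulrA.
have k_ln2 := big_theta_mulr (ln_natr_ge0 R) Hlam k_lam_ln.
by split; [exact: Dthr_big_theta | exact: early_switch_init_eventually_le_invn].
Qed.
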